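(* Let $h>0$, $\delta_1>0$, $\theta_1\in(0,\pi)$, $\lambda_1=\delta_1e^{\mathrm{i}\theta_1/2}$, with $\lambda_1\pm\frac{2\mathrm{i}}{h\lambda_1}\neq0$, and let $\alpha_1,\beta_1\in\mathbb{C}\setminus\{0\}$. Define $$E_n(t)=\left(\frac{2-\mathrm{i}h\delta_1^2e^{\mathrm{i}\theta_1}}{2+\mathrm{i}h\delta_1^2e^{\mathrm{i}\theta_1}}\right)^{n}\exp\!\left(\frac{\mathrm{i}}{2}\Big(\delta_1^2+\frac{1}{\delta_1^2}\Big)\cos\theta_1\, t-\frac12\Big(\delta_1^2-\frac{1}{\delta_1^2}\Big)\sin\theta_1\, t\right)$$ and $$U_n=-\frac{4\mathrm{i}\delta_1\alpha_1\bar\beta_1\sin\theta_1e^{\mathrm{i}\theta_1/2}}{|\beta_1|^2(2+\mathrm{i}h\delta_1^2e^{\mathrm{i}\theta_1})E_n^{-1}+|\alpha_1|^2(2e^{\mathrm{i}\theta_1}+\mathrm{i}h\delta_1^2)\bar E_n},$$ $$R_n=-\frac{2\mathrm{i}\delta_1\alpha_1\bar\beta_1\sin\theta_1e^{\mathrm{i}\theta_1/2}}{|\beta_1|^2E_n^{-1}+|\alpha_1|^2\bar E_ne^{\mathrm{i}\theta_1}},\qquad Q_n=-\frac{2\mathrm{i}\alpha_1\bar\beta_1\sin\theta_1e^{\mathrm{i}\theta_1/2}}{\delta_1\big(|\beta_1|^2E_n^{-1}e^{\mathrm{i}\theta_1}+|\alpha_1|^2\bar E_n\big)}.$$ Then $(U_n,R_n,Q_n)$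 is a solution of the semi-discrete MTM system (at all $(n,t)$ where the denominators are nonzero).
   Context: Fix $h>0$. The semi-discrete MTM system for complex-valued differentiable functions $U_n(t),R_n(t),Q_n(t)$, $n\in\mathbb{Z}$, is $$4\mathrm{i}\frac{dU_n}{dt}+Q_{n+1}+Q_n+\frac{2\mathrm{i}}{h}(R_{n+1}-R_n)+U_n^2(\bar R_n+\bar R_{n+1})-U_n(|Q_{n+1}|^2+|Q_n|^2+|R_{n+1}|^2+|R_n|^2)-\frac{\mathrm{i}h}{2}U_n^2(\bar Q_{n+1}-\bar Q_n)=0,$$ $$-\frac{2\mathrm{i}}{h}(Q_{n+1}-Q_n)+2U_n-|U_n|^2(Q_{n+1}+Q_n)=0,\qquad R_{n+1}+R_n-2U_n+\frac{\mathrm{i}h}{2}|U_n|^2(R_{n+1}-R_n)=0.$$ *)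

From Stdlib Require Import Reals ZArith.
Open Scope R_scope.

Record Cplx : Type := mkC { Re : R ; Im : R }.

Definition RtoC (x : R) : Cplx := mkC x 0.
Definition Ci : Cplx := mkC 0 1.
Definition Cadd (z w : Cplx) : Cplx := mkC (Re z + Re w) (Im z + Im w).
Definition Copp (z : Cplx) : Cplx := mkC (- Re z) (- Im z).
Definition Csub (z w : Cplx) : Cplx := Cadd z (Copp w).
Definition Cmul (z w : Cplx) : Cplx :=
  mkC (Re z * Re w - Im z * Im w) (Re z * Im w + Im z * Re w).
Definition Cinv (z : Cplx) : Cplx :=
  mkC (Re z / (Re z * Re z + Im z * Im z)) (- Im z / (Re z * Re z + Im z * Im z)).
Definition Cdiv (z w : Cplx) : Cplx := Cmul z (Cinv w).
Definition Cconj (z : Cplx) : Cplx := mkC (Re z) (- Im z).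
Definition Cnorm2 (z : Cplx) : Cplx := RtoC (Re z * Re z + Im z * Im z).
Definition Cexp (z : Cplx) : Cplx := mkC (exp (Re z) * cos (Im z)) (exp (Re z) * sin (Im z)).

Fixpoint Cpow (z : Cplx) (k : nat) : Cplx :=
  match k with O => RtoC 1 | S k' => Cmul z (Cpow z k') end.
Definition Cpowz (z : Cplx) (n : Z) : Cplx :=
  if (0 <=? n)%Z then Cpow z (Z.to_nat n) else Cinv (Cpow z (Z.to_nat (- n))).

Declare Scope C_scope.
Delimit Scope C_scope with C.
Infix "+" := Cadd : C_scope.
Infix "-" := Csub : C_scope.
Infix "*" := Cmul : C_scope.
Infix "/" := Cdiv : C_scope.
Notation "- z" := (Copp z) : C_scope.

Definition Cderiv_at (f : R -> Cplx) (t : R) (z : Cplx) : Prop :=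
  derivable_pt_lim (fun s => Re (f s)) t (Re z) /\
  derivable_pt_lim (fun s => Im (f s)) t (Im z).

Definition sdMTM_at (h : R) (U Rr Q : Z -> R -> Cplx) (n : Z) (t : R) : Prop :=
  let Un := U n t in
  let Rn := Rr n t in let Rn1 := Rr (n + 1)%Z t in
  let Qn := Q n t in let Qn1 := Q (n + 1)%Z t in
  (exists D : Cplx, Cderiv_at (U n) t D /\
     (RtoC 4 * Ci * D + Qn1 + Qn + (RtoC 2 * Ci / RtoC h) * (Rn1 - Rn)
      + Un * Un * (Cconj Rn + Cconj Rn1)
      - Un * (Cnorm2 Qn1 + Cnorm2 Qn + Cnorm2 Rn1 + Cnorm2 Rn)
      - (Ci * RtoC h / RtoC 2) * Un * Un * (Cconj Qn1 - Cconj Qn))%C = RtoC 0)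
  /\ (- (RtoC 2 * Ci / RtoC h) * (Qn1 - Qn) + RtoC 2 * Un
      - Cnorm2 Un * (Qn1 + Qn))%C = RtoC 0
  /\ (Rn1 + Rn - RtoC 2 * Un + (Ci * RtoC h / RtoC 2) * Cnorm2 Un * (Rn1 - Rn))%C
      = RtoC 0.

Section Sol.
Variables (h d th : R) (a b : Cplx).
Local Open Scope C_scope.

Definition eith : Cplx := Cexp (Ci * RtoC th).
Definition eith2 : Cplx := Cexp (Ci * RtoC (th / 2)).
Definition lam1 : Cplx := RtoC d * eith2.
Definition d2 : Cplx := RtoC (d * d).

Definition Esol (n : Z) (t : R) : Cplx :=
  Cpowz ((RtoC 2 - Ci * RtoC h * d2 * eith) / (RtoC 2 + Ci * RtoC h * d2 * eith)) n
  * Cexp ((Ci / RtoC 2) * (RtoC (d * d + 1 / (d * d))) * RtoC (cos th) * RtoC t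
          - (RtoC 1 / RtoC 2) * RtoC (d * d - 1 / (d * d)) * RtoC (sin th) * RtoC t).

Definition Uden (n : Z) (t : R) : Cplx :=
  Cnorm2 b * (RtoC 2 + Ci * RtoC h * d2 * eith) * Cinv (Esol n t)
  + Cnorm2 a * (RtoC 2 * eith + Ci * RtoC h * d2) * Cconj (Esol n t).
Definition Usol (n : Z) (t : R) : Cplx :=
  - (RtoC 4 * Ci * RtoC d * a * Cconj b * RtoC (sin th) * eith2) / Uden n t.

Definition Rden (n : Z) (t : R) : Cplx :=
  Cnorm2 b * Cinv (Esol n t) + Cnorm2 a * Cconj (Esol n t) * eith.
Definition Rsol (n : Z) (t : R) : Cplx :=
  - (RtoC 2 * Ci * RtoC d * a * Cconj b * RtoC (sin th) * eith2) / Rden n t.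

Definition Qden (n : Z) (t : R) : Cplx :=
  RtoC d * (Cnorm2 b * Cinv (Esol n t) * eith + Cnorm2 a * Cconj (Esol n t)).
Definition Qsol (n : Z) (t : R) : Cplx :=
  - (RtoC 2 * Ci * a * Cconj b * RtoC (sin th) * eith2) / Qden n t.
End Sol.

From Pilot Require Import Defs.
From Stdlib Require Import Reals ZArith Lra Lia Field.
Open Scope R_scope.

(* Write w = e^{i th/2}, kappa = i h d^2 and let E = E_n(t).  Clearing the
   inverse power E_n^{-1} and replacing sin th = (w^2 - w^-2)/(2i), the three
   fields become rational functions of E and conj E alone:
     R_n = - d A E / den_R(|E|^2),  Q_n = - A E / (d den_Q(|E|^2)),
     U_n = - 2 d A E / den_U(|E|^2),
   with A = a conj(b) (w^2 - w^-2) w and linear polynomials den_R, den_Q, den_U.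
   Moving one site multiplies E by the step ratio r = (2 - kappa w^2)/(2 + kappa w^2),
   and in time E evolves by E' = (i/2)(lambda^2 + lambda^-2) E, lambda = d w.  Each of the three MTM equations is then a rational identity in
   the atoms E, conj E, w, a, b, ... modulo i^2 = -1, which the field tactic proves
   once the denominators are known to be nonzero. *)

Lemma Cplx_ext (z w : Cplx) : Re z = Re w -> Im z = Im w -> z = w.
Proof. destruct z, w; simpl; intros -> ->; reflexivity. Qed.

Lemma Cnorm2_neq0 (z : Cplx) : z <> RtoC 0 -> Re z * Re z + Im z * Im z <> 0.
Proof.
destruct z as [x y]; simpl; intros Hz H; apply Hz.
assert (x = 0) by nra; assert (y = 0) by nra; subst; reflexivity.
Qed.

Lemma Cfield_theory :
  field_theory (RtoC 0) (RtoC 1) Cadd Cmul Csub Copp Cdiv Cinv (@eq Cplx).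
Proof.
constructor.
- constructor; intros; apply Cplx_ext; simpl; ring.
- intro H; injection H; lra.
- reflexivity.
- intros z Hz; pose proof (Cnorm2_neq0 z Hz); apply Cplx_ext; simpl; field; exact H.
Qed.
Add Field Cfield : Cfield_theory.

Local Open Scope C_scope.

(* The imaginary unit is an atom for [field]; its defining relation is passed
   to it explicitly as a rewriting rule, [field [Ci_sq]]. *)
Lemma Ci_sq : Ci * Ci = - RtoC 1.
Proof. apply Cplx_ext; simpl; ring. Qed.

Lemma Ci_neq0 : Ci <> RtoC 0.
Proof. intro E; injection E; lra. Qed.

(* The embedding of the reals is a ring morphism; [field] only knows 0 and 1,
   so numerals are expanded before calling it. *)
Lemma RtoC_2 : RtoC 2 = RtoC 1 + RtoC 1.
Proof. apply Cplx_ext; simpl; ring. Qed.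
Lemma RtoC_4 : RtoC 4 = RtoC 2 * RtoC 2.
Proof. apply Cplx_ext; simpl; ring. Qed.
Lemma RtoC_add x y : RtoC (x + y) = RtoC x + RtoC y.
Proof. apply Cplx_ext; simpl; ring. Qed.
Lemma RtoC_sub x y : RtoC (x - y) = RtoC x - RtoC y.
Proof. apply Cplx_ext; simpl; ring. Qed.
Lemma RtoC_mul x y : RtoC (x * y) = RtoC x * RtoC y.
Proof. apply Cplx_ext; simpl; ring. Qed.
Lemma RtoC_div x y : y <> 0%R -> RtoC (x / y) = RtoC x / RtoC y.
Proof. intro; apply Cplx_ext; simpl; field; assumption. Qed.

Lemma RtoC_neq0 (x : R) : x <> 0%R -> RtoC x <> RtoC 0.
Proof. intros Hx E; injection E; auto. Qed.

Lemma Cmul_neq0 (z w : Cplx) : z <> RtoC 0 -> w <> RtoC 0 -> z * w <> RtoC 0.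
Proof.
intros Hz Hw E; apply Hw.
transitivity (Cinv z * (z * w)); [field; exact Hz | rewrite E; ring].
Qed.

Lemma Cmul_neq0_inv (z w : Cplx) : z * w <> RtoC 0 -> z <> RtoC 0 /\ w <> RtoC 0.
Proof. intro H; split; intro E; apply H; rewrite E; ring. Qed.

Lemma Cinv_neq0 (z : Cplx) : z <> RtoC 0 -> Cinv z <> RtoC 0.
Proof.
intros Hz E; apply Hz.
transitivity (z * z * Cinv z); [field; exact Hz | rewrite E; ring].
Qed.

Lemma Copp_neq0 (z : Cplx) : z <> RtoC 0 -> - z <> RtoC 0.
Proof. intros Hz E; apply Hz; replace z with (- - z) by ring; rewrite E; ring. Qed.

Lemma Cdiv_neq0_num (z w : Cplx) : z / w <> RtoC 0 -> z <> RtoC 0.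
Proof. intros H E; apply H; rewrite E; unfold Cdiv; ring. Qed.

Lemma Cconj_mul z w : Cconj (z * w) = Cconj z * Cconj w.
Proof. apply Cplx_ext; simpl; ring. Qed.
Lemma Cconj_add z w : Cconj (z + w) = Cconj z + Cconj w.
Proof. apply Cplx_ext; simpl; ring. Qed.
Lemma Cconj_sub z w : Cconj (z - w) = Cconj z - Cconj w.
Proof. apply Cplx_ext; simpl; ring. Qed.
Lemma Cconj_opp z : Cconj (- z) = - Cconj z.
Proof. apply Cplx_ext; simpl; ring. Qed.
Lemma Cconj_inv z : Cconj (Cinv z) = Cinv (Cconj z).
Proof.
destruct z as [x y]; apply Cplx_ext; simpl;
  replace (- y * - y)%R with (y * y)%R by ring; unfold Rdiv; ring.
Qed.
Lemma Cconj_div z w : Cconj (z / w) = Cconj z / Cconj w.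
Proof. unfold Cdiv; rewrite Cconj_mul, Cconj_inv; reflexivity. Qed.
Lemma Cconj_RtoC x : Cconj (RtoC x) = RtoC x.
Proof. apply Cplx_ext; simpl; ring. Qed.
Lemma Cconj_Ci : Cconj Ci = - Ci.
Proof. apply Cplx_ext; simpl; ring. Qed.
Lemma Cconj_involutive z : Cconj (Cconj z) = z.
Proof. destruct z; apply Cplx_ext; simpl; ring. Qed.

Hint Rewrite Cconj_mul Cconj_add Cconj_sub Cconj_opp Cconj_div Cconj_inv
  Cconj_RtoC Cconj_Ci Cconj_involutive : cconj.

Lemma Cconj_neq0 (z : Cplx) : z <> RtoC 0 -> Cconj z <> RtoC 0.
Proof.
intros Hz E; apply Hz; rewrite <- (Cconj_involutive z), E; apply Cconj_RtoC.
Qed.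

Lemma Cnorm2_mul_conj z : Cnorm2 z = z * Cconj z.
Proof. apply Cplx_ext; simpl; ring. Qed.

Lemma Cexp_i_polar (x : R) : Cexp (Ci * RtoC x) = mkC (cos x) (sin x).
Proof.
unfold Cexp; apply Cplx_ext; simpl;
  replace (0 * x - 1 * 0)%R with 0%R by ring;
  replace (0 * 0 + 1 * x)%R with x by ring;
  rewrite exp_0; ring.
Qed.

Lemma Cexp_neq0 z : Cexp z <> RtoC 0.
Proof.
unfold Cexp; intro E; injection E; intros Hi Hr.
pose proof (exp_pos (Re z)); pose proof (sin2_cos2 (Im z)); unfold Rsqr in *.
apply Rmult_integral in Hi; apply Rmult_integral in Hr; destruct Hi, Hr; nra.
Qed.

Section HalfAngle.
Variable th : R.
Local Notation w := (eith2 th).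

Lemma eith2_sq : eith th = w * w.
Proof.
unfold eith, eith2; rewrite !Cexp_i_polar.
replace th with (2 * (th / 2))%R at 1 2 by field.
rewrite cos_2a, sin_2a; apply Cplx_ext; simpl; ring.
Qed.

Lemma eith2_unit : (Re w * Re w + Im w * Im w)%R = 1%R.
Proof.
unfold eith2; rewrite Cexp_i_polar; simpl.
pose proof (sin2_cos2 (th / 2)); unfold Rsqr in *; lra.
Qed.

Lemma eith2_neq0 : w <> RtoC 0.
Proof. intro E; pose proof eith2_unit as U; rewrite E in U; simpl in U; lra. Qed.

(* w lies on the unit circle, so conjugation inverts it. *)
Lemma Cconj_eith2 : Cconj w = RtoC 1 / w.
Proof.
pose proof eith2_unit as U; destruct w as [x y]; simpl in *.
apply Cplx_ext; simpl; rewrite U; field.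
Qed.

Lemma eith2_sum_diff :
  w * w + RtoC 1 / (w * w) = RtoC 2 * RtoC (cos th) /\
  w * w - RtoC 1 / (w * w) = RtoC 2 * Ci * RtoC (sin th).
Proof.
replace (RtoC 1 / (w * w)) with (Cconj (eith th))
  by (rewrite eith2_sq, Cconj_mul, Cconj_eith2; field; exact eith2_neq0).
rewrite <- eith2_sq; unfold eith; rewrite Cexp_i_polar.
split; apply Cplx_ext; simpl; ring.
Qed.

Lemma cos_eith2 : RtoC (cos th) = (w * w + RtoC 1 / (w * w)) / RtoC 2.
Proof. rewrite (proj1 eith2_sum_diff); field; apply RtoC_neq0; lra. Qed.

Lemma sin_eith2 : RtoC (sin th) = (w * w - RtoC 1 / (w * w)) / (RtoC 2 * Ci).
Proof.
rewrite (proj2 eith2_sum_diff); field; split; [exact Ci_neq0 | apply RtoC_neq0; lra].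
Qed.
End HalfAngle.

(* Side conditions left by [field]: each denominator is, up to [ring], a
   nonzero constant or one of the nonzero quantities in the context. *)
Ltac Cneq0 :=
  lazymatch goal with |- ?X <> RtoC 0 =>
  first [ assumption
        | exact Ci_neq0 | exact (eith2_neq0 _)
        | let e := fresh "e" in intro e; injection e; lra
        | match goal with H : ?Y <> RtoC 0 |- _ => replace X with Y by ring; exact H end ]
  end.
Ltac field_side_conditions :=
  rewrite ?RtoC_2 in *; repeat split;
  try change (mkC (R1 + R1) (R0 + R0)) with (RtoC 1 + RtoC 1); Cneq0.

Lemma Cpow_neq0 z k : z <> RtoC 0 -> Cpow z k <> RtoC 0.
Proof.
intro Hz; induction k as [|k IH]; simpl.
- intro E; injection E; lra.
- apply Cmul_neq0; assumption.
Qed.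

Lemma Cpowz_neq0 z n : z <> RtoC 0 -> Cpowz z n <> RtoC 0.
Proof.
intro Hz; unfold Cpowz; destruct (0 <=? n)%Z;
  [|apply Cinv_neq0]; apply Cpow_neq0; exact Hz.
Qed.

Lemma Cpowz_succ z n : z <> RtoC 0 -> Cpowz z (n + 1) = z * Cpowz z n.
Proof.
intro Hz; unfold Cpowz.
destruct (Z.leb_spec 0 n) as [Hn|Hn], (Z.leb_spec 0 (n + 1)) as [Hn1|Hn1]; try lia.
- replace (Z.to_nat (n + 1)) with (S (Z.to_nat n)) by lia; reflexivity.
- replace n with (-1)%Z by lia; simpl; field; exact Hz.
- replace (Z.to_nat (- n)) with (S (Z.to_nat (- (n + 1)))) by lia; simpl.
  field; split; [apply Cpow_neq0|]; exact Hz.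
Qed.

Lemma derivable_pt_lim_eq_val f t l l' :
  derivable_pt_lim f t l -> l = l' -> derivable_pt_lim f t l'.
Proof. intros H <-; exact H. Qed.

Lemma Cderiv_eq_val f t z z' : Cderiv_at f t z -> z = z' -> Cderiv_at f t z'.
Proof. intros H <-; exact H. Qed.

Lemma Cderiv_const c t : Cderiv_at (fun _ => c) t (RtoC 0).
Proof. split; apply derivable_pt_lim_const. Qed.

Lemma Cderiv_id t : Cderiv_at RtoC t (RtoC 1).
Proof. split; [apply derivable_pt_lim_id | apply derivable_pt_lim_const]. Qed.

Lemma Cderiv_add f g t u v : Cderiv_at f t u -> Cderiv_at g t v ->
  Cderiv_at (fun s => f s + g s) t (u + v).
Proof. intros [] []; split; apply derivable_pt_lim_plus; assumption. Qed.

Lemma Cderiv_sub f g t u v : Cderiv_at f t u -> Cderiv_at g t v ->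
  Cderiv_at (fun s => f s - g s) t (u - v).
Proof.
intros [] []; split; apply derivable_pt_lim_plus; try assumption;
  apply derivable_pt_lim_opp; assumption.
Qed.

Lemma Cderiv_mul f g t u v : Cderiv_at f t u -> Cderiv_at g t v ->
  Cderiv_at (fun s => f s * g s) t (u * g t + f t * v).
Proof.
intros [Hf1 Hf2] [Hg1 Hg2]; split; simpl; eapply derivable_pt_lim_eq_val.
- apply derivable_pt_lim_minus; apply derivable_pt_lim_mult; eassumption.
- simpl; ring.
- apply derivable_pt_lim_plus; apply derivable_pt_lim_mult; eassumption.
- simpl; ring.
Qed.

Lemma Cderiv_conj f t u : Cderiv_at f t u -> Cderiv_at (fun s => Cconj (f s)) t (Cconj u).
Proof. intros []; split; [|apply derivable_pt_lim_opp]; assumption. Qed.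

Lemma Cderiv_exp f t u : Cderiv_at f t u ->
  Cderiv_at (fun s => Cexp (f s)) t (Cexp (f t) * u).
Proof.
intros [H1 H2]; split; simpl; eapply derivable_pt_lim_eq_val.
- apply derivable_pt_lim_mult.
  + exact (derivable_pt_lim_comp _ exp _ _ _ H1 (derivable_pt_lim_exp _)).
  + exact (derivable_pt_lim_comp _ cos _ _ _ H2 (derivable_pt_lim_cos _)).
- simpl; ring.
- apply derivable_pt_lim_mult.
  + exact (derivable_pt_lim_comp _ exp _ _ _ H1 (derivable_pt_lim_exp _)).
  + exact (derivable_pt_lim_comp _ sin _ _ _ H2 (derivable_pt_lim_sin _)).
- simpl; ring.
Qed.

(* 1/f = conj f / |f|^2, differentiated with the real quotient rule. *)
Lemma Cderiv_inv f t u : Cderiv_at f t u -> f t <> RtoC 0 ->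
  Cderiv_at (fun s => Cinv (f s)) t (- u / (f t * f t)).
Proof.
intros [H1 H2] Hnz; pose proof (Cnorm2_neq0 _ Hnz) as Hn.
assert (Hd : derivable_pt_lim (fun s => Re (f s) * Re (f s) + Im (f s) * Im (f s))%R t
   (Re u * Re (f t) + Re (f t) * Re u + (Im u * Im (f t) + Im (f t) * Im u))%R)
  by (apply derivable_pt_lim_plus; apply derivable_pt_lim_mult; assumption).
assert (Hn2 : let x := Re (f t) in let y := Im (f t) in
  ((x * x - y * y) * (x * x - y * y) + (x * y + y * x) * (x * y + y * x))%R <> 0%R).
{ cbv zeta; replace (_ + _)%R with ((Re (f t) * Re (f t) + Im (f t) * Im (f t))
      * (Re (f t) * Re (f t) + Im (f t) * Im (f t)))%R by ring.
  apply Rmult_integral_contrapositive; auto. }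
cbv zeta in Hn2.
split; eapply derivable_pt_lim_eq_val.
- apply derivable_pt_lim_div; [exact H1 | exact Hd | exact Hn].
- simpl; unfold Rsqr; field; auto.
- apply derivable_pt_lim_div; [apply derivable_pt_lim_opp; exact H2 | exact Hd | exact Hn].
- simpl; unfold Rsqr; field; auto.
Qed.

Lemma Cderiv_div f g t u v : Cderiv_at f t u -> Cderiv_at g t v -> g t <> RtoC 0 ->
  Cderiv_at (fun s => f s / g s) t ((u * g t - f t * v) / (g t * g t)).
Proof.
intros Hf Hg Hz; eapply Cderiv_eq_val.
- exact (Cderiv_mul _ _ _ _ _ Hf (Cderiv_inv _ _ _ Hg Hz)).
- unfold Cdiv; field; exact Hz.
Qed.

Section SolitonAlgebra.
Variables (h d th : R) (a b : Cplx).
Local Notation w := (eith2 th).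

(* kappa = i h d^2; one lattice step multiplies E_n by step_ratio, and the
   time evolution multiplies it by exp(dispersion t). *)
Definition kappa : Cplx := Ci * RtoC h * (RtoC d * RtoC d).
Definition step_ratio : Cplx := (RtoC 2 - kappa * (w * w)) / (RtoC 2 + kappa * (w * w)).
Definition dispersion : Cplx :=
  Ci / RtoC 2 * (RtoC d * RtoC d * (w * w) + RtoC 1 / (RtoC d * RtoC d * (w * w))).

(* Common amplitude 2 i sin(th) a conj(b) e^{i th/2} of the three fields. *)
Definition amplitude : Cplx := a * Cconj b * (w * w - RtoC 1 / (w * w)) * w.

(* Denominators of R_n, Q_n, U_n after clearing E_n^{-1}, as functions of |E_n|^2. *)
Definition denR (P : Cplx) : Cplx := b * Cconj b + a * Cconj a * P * (w * w).
Definition denQ (P : Cplx) : Cplx := b * Cconj b * (w * w) + a * Cconj a * P.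
Definition denU (P : Cplx) : Cplx :=
  b * Cconj b * (RtoC 2 + kappa * (w * w)) + a * Cconj a * (RtoC 2 * (w * w) + kappa) * P.

(* The fields at a site where E_n = z. *)
Definition profR (z : Cplx) : Cplx := - RtoC d * amplitude * z / denR (z * Cconj z).
Definition profQ (z : Cplx) : Cplx := - amplitude * z / (RtoC d * denQ (z * Cconj z)).
Definition profU (z : Cplx) : Cplx := - RtoC 2 * RtoC d * amplitude * z / denU (z * Cconj z).

(* The time derivative of U_n, computed from E' = dispersion E. *)
Definition profU_dot (z : Cplx) : Cplx :=
  profU z * (dispersion - a * Cconj a * (RtoC 2 * (w * w) + kappa)
     * (dispersion + Cconj dispersion) * (z * Cconj z) / denU (z * Cconj z)).

(* Denominators at the next site and conjugate denominator, cleared of the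
   factors coming from step_ratio and from conj w = 1/w. *)
Definition denR_next (P : Cplx) : Cplx :=
  b * Cconj b * (RtoC 2 + kappa * (w * w)) * (RtoC 2 * (w * w) - kappa)
  + a * Cconj a * (RtoC 2 - kappa * (w * w)) * (RtoC 2 * (w * w) + kappa) * P * (w * w).
Definition denQ_next (P : Cplx) : Cplx :=
  b * Cconj b * (RtoC 2 + kappa * (w * w)) * (RtoC 2 * (w * w) - kappa) * (w * w)
  + a * Cconj a * (RtoC 2 - kappa * (w * w)) * (RtoC 2 * (w * w) + kappa) * P.
Definition denU_conj (P : Cplx) : Cplx :=
  b * Cconj b * (RtoC 2 * (w * w) - kappa) + a * Cconj a * (RtoC 2 - kappa * (w * w)) * P.

Ltac unfold_soliton :=
  unfold profU_dot, profR, profQ, profU, amplitude, step_ratio, dispersion,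
    denR, denQ, denU, denR_next, denQ_next, denU_conj, kappa in *;
  rewrite ?Cnorm2_mul_conj; autorewrite with cconj in *;
  rewrite ?Cconj_eith2, ?RtoC_2 in *.

Lemma conj_factor_plus : RtoC 2 * (w * w) + kappa = w * w * Cconj (RtoC 2 - kappa * (w * w)).
Proof. unfold_soliton; field [Ci_sq]; field_side_conditions. Qed.

Lemma conj_factor_minus : RtoC 2 * (w * w) - kappa = w * w * Cconj (RtoC 2 + kappa * (w * w)).
Proof. unfold_soliton; field [Ci_sq]; field_side_conditions. Qed.

Lemma denU_conj_eq z : denU_conj (z * Cconj z) = w * w * Cconj (denU (z * Cconj z)).
Proof. unfold_soliton; field [Ci_sq]; field_side_conditions. Qed.

Lemma denR_next_eq z :
  RtoC 2 + kappa * (w * w) <> RtoC 0 -> RtoC 2 * (w * w) - kappa <> RtoC 0 ->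
  denR_next (z * Cconj z)
  = denR (step_ratio * z * Cconj (step_ratio * z))
    * ((RtoC 2 + kappa * (w * w)) * (RtoC 2 * (w * w) - kappa)).
Proof. intros; unfold_soliton; field [Ci_sq]; field_side_conditions. Qed.

Lemma denQ_next_eq z :
  RtoC 2 + kappa * (w * w) <> RtoC 0 -> RtoC 2 * (w * w) - kappa <> RtoC 0 ->
  denQ_next (z * Cconj z)
  = denQ (step_ratio * z * Cconj (step_ratio * z))
    * ((RtoC 2 + kappa * (w * w)) * (RtoC 2 * (w * w) - kappa)).
Proof. intros; unfold_soliton; field [Ci_sq]; field_side_conditions. Qed.

(* All denominators occurring in the MTM equations at site n, for E_n = z. *)
Definition nondegenerate (z : Cplx) : Prop :=
  let P := z * Cconj z in
  z <> RtoC 0 /\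
  RtoC 2 + kappa * (w * w) <> RtoC 0 /\ RtoC 2 - kappa * (w * w) <> RtoC 0 /\
  RtoC 2 * (w * w) + kappa <> RtoC 0 /\ RtoC 2 * (w * w) - kappa <> RtoC 0 /\
  denR P <> RtoC 0 /\ denR_next P <> RtoC 0 /\ denQ P <> RtoC 0 /\
  denQ_next P <> RtoC 0 /\ denU P <> RtoC 0 /\ denU_conj P <> RtoC 0.

Hypotheses (Hh : RtoC h <> RtoC 0) (Hd : RtoC d <> RtoC 0).
Variable z : Cplx.
Hypothesis Hz : nondegenerate z.

Lemma mtm_R_equation :
  let U := profU z in let R0 := profR z in let R1 := profR (step_ratio * z) in
  R1 + R0 - RtoC 2 * U + (Ci * RtoC h / RtoC 2) * Cnorm2 U * (R1 - R0) = RtoC 0.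
Proof.
cbv zeta; destruct Hz as (? & ? & ? & ? & ? & ? & ? & ? & ? & ? & ?).
unfold_soliton; field [Ci_sq]; field_side_conditions.
Qed.

Lemma mtm_Q_equation :
  let U := profU z in let Q0 := profQ z in let Q1 := profQ (step_ratio * z) in
  - (RtoC 2 * Ci / RtoC h) * (Q1 - Q0) + RtoC 2 * U - Cnorm2 U * (Q1 + Q0) = RtoC 0.
Proof.
cbv zeta; destruct Hz as (? & ? & ? & ? & ? & ? & ? & ? & ? & ? & ?).
unfold_soliton; field [Ci_sq]; field_side_conditions.
Qed.

Lemma mtm_U_equation :
  let U := profU z in
  let R0 := profR z in let R1 := profR (step_ratio * z) in
  let Q0 := profQ z in let Q1 := profQ (step_ratio * z) in
  RtoC 4 * Ci * profU_dot z + Q1 + Q0 + (RtoC 2 * Ci / RtoC h) * (R1 - R0)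
  + U * U * (Cconj R0 + Cconj R1)
  - U * (Cnorm2 Q1 + Cnorm2 Q0 + Cnorm2 R1 + Cnorm2 R0)
  - (Ci * RtoC h / RtoC 2) * U * U * (Cconj Q1 - Cconj Q0) = RtoC 0.
Proof.
cbv zeta; destruct Hz as (? & ? & ? & ? & ? & ? & ? & ? & ? & ? & ?).
rewrite RtoC_4; unfold_soliton; field [Ci_sq]; field_side_conditions.
Qed.
End SolitonAlgebra.

Section SolitonProfiles.
Variables (h d th : R) (a b : Cplx).
Hypotheses (Hd : d <> 0%R) (Hr : step_ratio h d th <> RtoC 0).
Local Notation E n t := (Esol h d th n t).

Lemma step_ratio_eq :
  (RtoC 2 - Ci * RtoC h * Defs.d2 d * eith th) / (RtoC 2 + Ci * RtoC h * Defs.d2 d * eith th)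
  = step_ratio h d th.
Proof. unfold step_ratio, kappa, Defs.d2; rewrite RtoC_mul, eith2_sq; reflexivity. Qed.

Lemma Esol_succ n t : E (n + 1)%Z t = step_ratio h d th * E n t.
Proof. unfold Esol; rewrite step_ratio_eq, Cpowz_succ by exact Hr; ring. Qed.

Lemma Esol_neq0 n t : E n t <> RtoC 0.
Proof.
unfold Esol; rewrite step_ratio_eq.
apply Cmul_neq0; [apply Cpowz_neq0; exact Hr | apply Cexp_neq0].
Qed.

Lemma exponent_rate :
  Ci / RtoC 2 * RtoC (d * d + 1 / (d * d)) * RtoC (cos th)
  - RtoC 1 / RtoC 2 * RtoC (d * d - 1 / (d * d)) * RtoC (sin th) = dispersion d th.
Proof.
assert (Hdd : (d * d)%R <> 0%R) by (apply Rmult_integral_contrapositive; auto).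
unfold dispersion; rewrite RtoC_add, RtoC_sub, RtoC_div, RtoC_mul, cos_eith2, sin_eith2
  by exact Hdd.
rewrite ?RtoC_2; field [Ci_sq]; field_side_conditions.
Qed.

Lemma Esol_deriv n t : Cderiv_at (Esol h d th n) t (dispersion d th * E n t).
Proof.
unfold Esol; eapply Cderiv_eq_val.
- apply Cderiv_mul; [apply Cderiv_const|]; apply Cderiv_exp.
  apply Cderiv_sub; apply Cderiv_mul; (apply Cderiv_const || apply Cderiv_id).
- rewrite <- exponent_rate; ring.
Qed.

Lemma Rden_eq n t : Rden h d th a b n t = denR th a b (E n t * Cconj (E n t)) / E n t.
Proof.
unfold Rden, denR; rewrite !Cnorm2_mul_conj, eith2_sq; field; apply Esol_neq0.
Qed.

Lemma Qden_eq n t :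
  Qden h d th a b n t = RtoC d * denQ th a b (E n t * Cconj (E n t)) / E n t.
Proof.
unfold Qden, denQ; rewrite !Cnorm2_mul_conj, eith2_sq; field; apply Esol_neq0.
Qed.

Lemma Uden_eq n t : Uden h d th a b n t = denU h d th a b (E n t * Cconj (E n t)) / E n t.
Proof.
unfold Uden, denU, kappa, Defs.d2; rewrite !Cnorm2_mul_conj, eith2_sq, RtoC_mul.
field; apply Esol_neq0.
Qed.

Ltac to_profile den_eq n t :=
  let Hden := fresh "Hden" in
  intro Hden; rewrite den_eq in Hden |- *; apply Cdiv_neq0_num in Hden;
  repeat match goal with H : _ * _ <> RtoC 0 |- _ => apply Cmul_neq0_inv in H; destruct H end;
  pose proof (Esol_neq0 n t); pose proof (RtoC_neq0 d Hd);
  unfold profR, profQ, profU, amplitude; rewrite sin_eith2, ?RtoC_4, ?RtoC_2;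
  field [Ci_sq]; field_side_conditions.

Lemma Rsol_eq n t :
  Rden h d th a b n t <> RtoC 0 -> Rsol h d th a b n t = profR d th a b (E n t).
Proof. unfold Rsol; to_profile Rden_eq n t. Qed.

Lemma Qsol_eq n t :
  Qden h d th a b n t <> RtoC 0 -> Qsol h d th a b n t = profQ d th a b (E n t).
Proof. unfold Qsol; to_profile Qden_eq n t. Qed.

Lemma Usol_eq n t :
  Uden h d th a b n t <> RtoC 0 -> Usol h d th a b n t = profU h d th a b (E n t).
Proof. unfold Usol; to_profile Uden_eq n t. Qed.

Lemma Usol_deriv n t : Uden h d th a b n t <> RtoC 0 ->
  Cderiv_at (Usol h d th a b n) t (profU_dot h d th a b (E n t)).
Proof.
intro HU; pose proof (Esol_neq0 n t) as HE.
unfold Usol; eapply Cderiv_eq_val.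
- apply Cderiv_div; [apply Cderiv_const | | exact HU].
  unfold Uden; apply Cderiv_add; apply Cderiv_mul; try apply Cderiv_const.
  + apply Cderiv_inv; [apply Esol_deriv | exact HE].
  + apply Cderiv_conj, Esol_deriv.
- cbv beta; rewrite Uden_eq in HU |- *; apply Cdiv_neq0_num in HU.
  pose proof (RtoC_neq0 d Hd).
  unfold profU_dot, profU, denU, amplitude, kappa, Defs.d2 in *.
  rewrite !Cnorm2_mul_conj, Cconj_mul, eith2_sq, RtoC_mul, sin_eith2, RtoC_4, ?RtoC_2.
  field [Ci_sq]; field_side_conditions.
Qed.
End SolitonProfiles.

Section Nondegeneracy.
Variables (h d th : R) (a b : Cplx).
Hypotheses (Hh : h <> 0%R) (Hd : d <> 0%R).
Local Notation w := (eith2 th).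
Local Notation kap := (kappa h d).

Lemma lam1_neq0 : lam1 d th <> RtoC 0.
Proof. apply Cmul_neq0; [apply RtoC_neq0; exact Hd | apply eith2_neq0]. Qed.

Lemma step_factor_minus :
  RtoC 2 - kap * (w * w)
  = - Ci * RtoC h * lam1 d th * (lam1 d th + Ci * RtoC 2 / (RtoC h * lam1 d th)).
Proof.
pose proof lam1_neq0; pose proof (RtoC_neq0 h Hh).
unfold kappa, lam1; rewrite ?RtoC_2; field [Ci_sq]; field_side_conditions.
Qed.

Lemma step_factor_plus :
  RtoC 2 + kap * (w * w)
  = Ci * RtoC h * lam1 d th * (lam1 d th - Ci * RtoC 2 / (RtoC h * lam1 d th)).
Proof.
pose proof lam1_neq0; pose proof (RtoC_neq0 h Hh).
unfold kappa, lam1; rewrite ?RtoC_2; field [Ci_sq]; field_side_conditions.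
Qed.

Hypotheses
  (Hplus : lam1 d th + Ci * RtoC 2 / (RtoC h * lam1 d th) <> RtoC 0)
  (Hminus : lam1 d th - Ci * RtoC 2 / (RtoC h * lam1 d th) <> RtoC 0).

Lemma step_factors_neq0 :
  RtoC 2 + kap * (w * w) <> RtoC 0 /\ RtoC 2 - kap * (w * w) <> RtoC 0 /\
  RtoC 2 * (w * w) + kap <> RtoC 0 /\ RtoC 2 * (w * w) - kap <> RtoC 0.
Proof.
pose proof (RtoC_neq0 h Hh); pose proof lam1_neq0.
assert (Hp : RtoC 2 + kap * (w * w) <> RtoC 0)
  by (rewrite step_factor_plus;
      apply Cmul_neq0; [apply Cmul_neq0; [apply Cmul_neq0|]|]; auto using Ci_neq0).
assert (Hm : RtoC 2 - kap * (w * w) <> RtoC 0)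
  by (rewrite step_factor_minus;
      apply Cmul_neq0; [apply Cmul_neq0; [apply Cmul_neq0|]|];
      auto using Copp_neq0, Ci_neq0).
rewrite conj_factor_plus, conj_factor_minus.
repeat split; try assumption; apply Cmul_neq0;
  auto using Cmul_neq0, Cconj_neq0, eith2_neq0.
Qed.

Lemma nondegenerate_Esol n t :
  Uden h d th a b n t <> RtoC 0 ->
  Rden h d th a b n t <> RtoC 0 -> Rden h d th a b (n + 1)%Z t <> RtoC 0 ->
  Qden h d th a b n t <> RtoC 0 -> Qden h d th a b (n + 1)%Z t <> RtoC 0 ->
  step_ratio h d th <> RtoC 0 /\ nondegenerate h d th a b (Esol h d th n t).
Proof.
intros HU HR HR1 HQ HQ1.
destruct step_factors_neq0 as (Hp & Hm & Hcp & Hcm).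
assert (Hr : step_ratio h d th <> RtoC 0)
  by (unfold step_ratio, Cdiv; apply Cmul_neq0; [|apply Cinv_neq0]; assumption).
rewrite Uden_eq in HU; rewrite Rden_eq in HR, HR1; rewrite Qden_eq in HQ, HQ1;
  try exact Hr.
rewrite Esol_succ in HR1, HQ1 by exact Hr.
apply Cdiv_neq0_num in HU, HR, HR1, HQ, HQ1.
apply Cmul_neq0_inv in HQ as [_ HQ]; apply Cmul_neq0_inv in HQ1 as [_ HQ1].
split; [exact Hr|].
unfold nondegenerate; cbv zeta; repeat split; try assumption.
- apply Esol_neq0; exact Hr.
- rewrite denR_next_eq by assumption; apply Cmul_neq0; [|apply Cmul_neq0]; assumption.
- rewrite denQ_next_eq by assumption; apply Cmul_neq0; [|apply Cmul_neq0]; assumption.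
- rewrite denU_conj_eq; apply Cmul_neq0; [apply Cmul_neq0; apply eith2_neq0|].
  apply Cconj_neq0; exact HU.
Qed.
End Nondegeneracy.

(* The one-soliton solves the semi-discrete MTM system wherever its
   denominators are nonzero. *)
Theorem mainTheorem6 (h d th : R) (a b : Cplx) :
  0 < h -> 0 < d -> 0 < th < PI ->
  (lam1 d th + Ci * RtoC 2 / (RtoC h * lam1 d th))%C <> RtoC 0 ->
  (lam1 d th - Ci * RtoC 2 / (RtoC h * lam1 d th))%C <> RtoC 0 ->
  a <> RtoC 0 -> b <> RtoC 0 ->
  forall (n : Z) (t : R),
    Uden h d th a b n t <> RtoC 0 ->
    Rden h d th a b n t <> RtoC 0 -> Rden h d th a b (n + 1)%Z t <> RtoC 0 ->
    Qden h d th a b n t <> RtoC 0 -> Qden h d th a b (n + 1)%Z t <> RtoC 0 ->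
    sdMTM_at h (Usol h d th a b) (Rsol h d th a b) (Qsol h d th a b) n t.
Proof.
intros Hh Hd _ Hplus Hminus _ _ n t HU HR HR1 HQ HQ1.
assert (Hh0 : h <> 0%R) by lra; assert (Hd0 : d <> 0%R) by lra.
destruct (nondegenerate_Esol h d th a b Hh0 Hd0 Hplus Hminus n t HU HR HR1 HQ HQ1)
  as [Hr Hz].
pose proof (RtoC_neq0 h Hh0); pose proof (RtoC_neq0 d Hd0).
unfold sdMTM_at; cbv zeta.
rewrite (Usol_eq h d th a b Hd0 Hr n t HU),
  (Rsol_eq h d th a b Hd0 Hr n t HR), (Rsol_eq h d th a b Hd0 Hr (n + 1) t HR1),
  (Qsol_eq h d th a b Hd0 Hr n t HQ), (Qsol_eq h d th a b Hd0 Hr (n + 1) t HQ1),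
  !(Esol_succ h d th Hr n t).
split; [|split].
- exists (profU_dot h d th a b (Esol h d th n t)); split.
  + apply Usol_deriv; assumption.
  + apply mtm_U_equation; assumption.
- apply mtm_Q_equation; assumption.
- apply mtm_R_equation; assumption.
Qed.
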